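(* Let $X$ be a standard conic bundle over a field $k$ with $n$ geometrically degenerate fibers, and let $G\subseteq W(\mathsf D_n)$ be its splitting group, i.e. the (finite) image of the Galois representation $\rho:\mathrm{Gal}(\bar k/k)\to \mathrm{Aut}_0(\mathrm{Pic}(\bar X))$. Let $G_2$ be a Sylow $2$-subgroup of $G$. Then $G$ satisfies the (H1) condition if and only if $G_2$ satisfies the (H1) condition.
   Context: A standard conic bundle $\pi:X\to\mathbb P^1$ over $k$ is a geometrically rational surface whose general fiber is a smooth conic and which has, over $\bar k$, $n$ degenerate fibers, each a union of two intersecting lines $q_j^+\cup q_j^-$. $\bar X=X\times_k\bar k$. $\mathrm{Aut}_0(\mathrm{Pic}(\bar X))$ denotes the automorphisms of $\mathrm{Pic}(\bar X)$ preserving the intersection form and $K_X$; the Galois action factors through the Weyl group $W(\mathsf D_n)$ (signed permutations of the pairs $q_j^\pm$ with an even number of sign changes). A finite group $H$ acting on $\mathrm{Pic}(\bar X)$ is said to satisfy the (H1) condition if $\mathrm H^1(H',\mathrm{Pic}(\bar X))=0$ for every subgroup $H'\subseteq H$. *)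

From HB Require Import structures.
From mathcomp Require Import all_boot all_order all_algebra all_fingroup all_solvable.
Set Implicit Arguments. Unset Strict Implicit. Unset Printing Implicit Defensive.
Import GRing.Theory Num.Theory.
Local Open Scope ring_scope.

(* The 2n lines q_j^+ = (j, true), q_j^- = (j, false) in the degenerate fibers.
   Elements of Aut(lines) are permutations of 'I_n * bool. *)
Definition line (n : nat) := ('I_n * bool)%type.
Notation lperm n := {perm ('I_n * bool)}.

Definition Jset n (p : lperm n) : {set 'I_n} :=
  [set k | [exists j, p (j, true) == (k, false)]].

(* W(D_n): signed permutations of the pairs {q_j^+, q_j^-} (i.e. permutations
   commuting with the involution q_j^+ <-> q_j^-) with an even number of
   sign changes. *)
Definition WD n : {set lperm n} :=
  [set p : lperm n | [forall x : 'I_n * bool, p (x.1, ~~ x.2) == ((p x).1, ~~ (p x).2)]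
                     && ~~ odd #|Jset p|].

(* Pic(Xbar) = Z S + Z F + sum_j Z E_j, where Xbar is the blow-up of a
   Hirzebruch surface in n points lying on distinct fibers, S a section class,
   F the fiber class, E_j = q_j^+ and q_j^- = F - E_j.
   An element ((a, b), c) stands for a S + b F + sum_j c_j E_j. *)
Definition pic (n : nat) := (int * int * {ffun 'I_n -> int})%type.

(* Action of p in W(D_n) on Pic(Xbar): q_x |-> q_(p x), F |-> F, and
   S |-> S + (|J|/2) F - sum_(k in J) E_k (forced by p(K_X) = K_X, where
   K_X = -2S - (e+2)F + sum_j E_j).  This is a right action:
   pic_act (p * r) = pic_act r \o pic_act p (mathcomp's perm product). *)
Definition pic_act n (p : lperm n) (v : pic n) : pic n :=
  let a := v.1.1 in let b := v.1.2 in let c := v.2 in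
  (a,
   b + a * (#|Jset p| %/ 2)%N%:Z
     + \sum_(j : 'I_n) (if (p (j, true)).2 then 0 else c j),
   [ffun k : 'I_n => (if k \in Jset p then - a else 0)
      + \sum_(j : 'I_n) (if p (j, true) == (k, true) then c j
                         else if p (j, true) == (k, false) then - c j else 0)]).

Definition H1_zero n (H : {set lperm n}) : Prop :=
  forall f : lperm n -> pic n,
    (forall g h, g \in H -> h \in H -> f (g * h)%g = pic_act h (f g) + f h) ->
    exists m : pic n, forall g, g \in H -> f g = pic_act g m - m.

Definition H1_condition n (H : {set lperm n}) : Prop :=
  forall H' : {group lperm n}, H' \subset H -> H1_zero H'.

From HB Require Import structures.
From mathcomp Require Import all_boot all_order all_algebra all_fingroup all_solvable.
From mathcomp Require Import ring zify.
Set Implicit Arguments. Unset Strict Implicit. Unset Printing Implicit Defensive.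
Import GRing.Theory Num.Theory.
Local Open Scope ring_scope.

(* (H1) passes to subgroups, so only the converse needs proof. Let H <= G and
   let P be a Sylow 2-subgroup of H; it is G-conjugate to a subgroup of G2, so
   H^1(P, Pic) = 0, and by restriction-corestriction #|H : P| kills every
   cocycle on H that vanishes on P. On the other hand 4 kills H^1(H, Pic) for
   every H <= W(D_n): writing classes as a S + b F + sum_j c_j E_j, the
   coordinate a and the invariant form 2b + sum_j c_j turn a cocycle into
   homomorphisms H -> Z, which vanish, and then the c_j come from a cocycle of
   the permutation module on the 2n lines, a coboundary by Shapiro's lemma.
   As #|H : P| is odd, H^1(H, Pic) = 0. *)

Lemma int_hom_trivial (gT : finGroupType) (H : {group gT}) (phi : gT -> int) :
  {in H &, {morph phi : x y / (x * y)%g >-> x + y}} -> {in H, phi =1 fun=> 0}.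
Proof.
move=> phiM g gH.
have phi1 : phi 1%g = 0 by apply: (addrI (phi 1%g)); rewrite -phiM ?mulg1 ?addr0.
have phiX k : phi (g ^+ k)%g = phi g *+ k.
  by elim: k => [|k IHk]; rewrite ?phi1 // expgS phiM ?groupX // IHk mulrS.
have /eqP := phiX #[g]%g; rewrite expg_order phi1 eq_sym mulrn_eq0.
by rewrite eqn0Ngt order_gt0 => /eqP.
Qed.

Section GroupCohomology.
Variables (gT : finGroupType) (G : {group gT}) (V : zmodType).
Variable act : gT -> {additive V -> V}.
Hypothesis act1 : act 1%g =1 id.
Hypothesis actM : {in G &, forall g h v, act (g * h)%g v = act h (act g v)}.

Definition cocycle (H : {set gT}) (f : gT -> V) :=
  {in H &, forall g h, f (g * h)%g = act h (f g) + f h}.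
Definition coboundary (m : V) (g : gT) := act g m - m.
Definition is_coboundary (H : {set gT}) (f : gT -> V) :=
  exists m, {in H, forall g, f g = coboundary m g}.
Definition H1_trivial (H : {set gT}) :=
  forall f, cocycle H f -> is_coboundary H f.

Lemma coboundary_cocycle (H : {set gT}) m : H \subset G -> cocycle H (coboundary m).
Proof.
move=> sHG g h gH hH; rewrite /coboundary actM ?(subsetP sHG) // raddfB.
by rewrite addrA subrK.
Qed.

Lemma cocycleB (H : {set gT}) f f' : cocycle H f -> cocycle H f' -> cocycle H (f \- f').
Proof. by move=> fc f'c g h gH hH; rewrite /= fc // f'c // raddfB opprD addrACA. Qed.

Lemma coboundaryD (m m' : V) g : coboundary (m + m') g = coboundary m g + coboundary m' g.
Proof. by rewrite /coboundary raddfD opprD addrACA. Qed.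

Lemma coboundaryB (m m' : V) g : coboundary (m - m') g = coboundary m g - coboundary m' g.
Proof. by rewrite /coboundary raddfB !opprD !opprK addrACA. Qed.

Lemma is_coboundaryB (H : {set gT}) f f' :
  is_coboundary H f -> is_coboundary H f' -> is_coboundary H (f \- f').
Proof.
by move=> [m fm] [m' f'm']; exists (m - m') => g gH; rewrite coboundaryB /= fm ?f'm'.
Qed.

Lemma is_coboundaryMn (H : {set gT}) f k :
  is_coboundary H f -> is_coboundary H (fun g => f g *+ k).
Proof.
move=> [m fm]; exists (m *+ k) => g gH.
by rewrite fm // /coboundary raddfMn mulrnBl.
Qed.

Lemma is_coboundary_coprime (H : {set gT}) f k t : coprime k t ->
  is_coboundary H (fun g => f g *+ k) -> is_coboundary H (fun g => f g *+ t) ->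
  is_coboundary H f.
Proof.
move=> co fk ft; case: (posnP k) => [k0 | k_gt0].
  by move: co; rewrite k0 /coprime gcd0n => /eqP t1; move: ft; rewrite t1.
have [a _] := Bezoutl t k_gt0; rewrite (eqP co) => /dvdnP [b Eb].
have [m fm] := is_coboundaryB (is_coboundaryMn b fk) (is_coboundaryMn a ft).
by exists m => g gH; rewrite -fm //= -!mulrnA mulnC -Eb mulrnDr mulr1n mulnC addrK.
Qed.

Lemma cocycle_index_coboundary (H P : {group gT}) f :
  P \subset H -> cocycle H f -> {in P, f =1 fun=> 0} ->
  is_coboundary H (fun g => f g *+ #|H : P|%g).
Proof.
move=> sPH fc f0.
have fP p g : p \in P -> g \in H -> f (p * g)%g = f g.
  by move=> pP gH; rewrite fc ?(subsetP sPH p pP) // f0 // raddf0 add0r.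
have f_repr C x : C \in rcosets P H -> x \in C -> f x = f (repr C).
  case/rcosetsP => y yH -> /rcosetP [p pP ->].
  by have /rcosetP [p' p'P ->] := mem_repr_rcoset P y; rewrite !fP.
(* Corestriction of the restriction: right translation by g permutes the
   cosets of P, and f is constant on each of them. *)
pose S := \sum_(C in rcosets P H) f (repr C).
exists (- S) => g gH.
have shift C : C \in rcosets P H -> f (repr ('Rs%act C g)) = act g (f (repr C)) + f g.
  case/rcosetsP => y yH ->; rewrite /= rcosetE -rcosetM.
  have /rcosetP [p pP ->] := mem_repr_rcoset P y.
  have pyH : (p * y)%g \in H by rewrite groupM ?(subsetP sPH p pP).
  rewrite -(f_repr _ (p * y * g)%g); first by rewrite fc.
    by apply/rcosetsP; exists (y * g)%g; rewrite ?groupM.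
  by rewrite -mulgA mem_mulg ?set11.
have gN : g \in 'N(rcosets P H | 'Rs)%g := subsetP (actsRs_rcosets P H) g gH.
have ES : S = \sum_(C in rcosets P H) f (repr ('Rs%act C g)).
  exact: reindex_astabs gN.
rewrite (eq_bigr _ shift) big_split /= sumr_const -raddf_sum -/S in ES.
by rewrite /coboundary raddfN opprK {2}ES addrA addNr add0r.
Qed.

Lemma H1_trivial_conjg (H : {group gT}) x :
  H \subset G -> x \in G -> H1_trivial (H :^ x)%g -> H1_trivial H.
Proof.
move=> sHG xG H1Hx f fc.
have inG y : y \in H -> y \in G := subsetP sHG y.
have Hx_G y : y \in (H :^ x)%g -> y \in G.
  by rewrite mem_conjg => /inG; rewrite groupJr ?groupV.
pose fx y := act x (f (y ^ x^-1)%g).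
have fxc : cocycle (H :^ x)%g fx.
  move=> y z yHx zHx; have zG := Hx_G z zHx.
  move: yHx zHx; rewrite !mem_conjg => yH zH; have zxG := inG _ zH.
  rewrite /fx conjMg fc // raddfD -!actM //.
  by rewrite conjgE invgK mulgA mulgKV.
have [m fxm] := H1Hx fx fxc.
exists (act x^-1%g m) => h hH.
have hG := inG h hH; have hxG : (h ^ x)%g \in G by rewrite groupJ.
have xVG : (x^-1)%g \in G by rewrite groupV.
have -> : f h = act x^-1%g (fx (h ^ x)%g).
  by rewrite /fx conjgK -actM // mulgV act1.
rewrite fxm ?memJ_conjg // raddfB /= -!actM //.
by rewrite conjgE mulgA mulgK actM.
Qed.

Lemma H1_trivial_coprime_index (H P : {group gT}) k :
  H \subset G -> P \subset H -> coprime k #|H : P|%g ->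
  (forall f, cocycle H f -> is_coboundary H (fun g => f g *+ k)) ->
  H1_trivial P -> H1_trivial H.
Proof.
move=> sHG sPH coPk torsion H1P f fc.
have [m1 fm1] : is_coboundary P f.
  by apply: H1P => g h gP hP; apply: fc; apply: (subsetP sPH).
pose f' := f \- coboundary m1.
have f'c : cocycle H f' by apply: cocycleB; last exact: coboundary_cocycle.
have f'P : {in P, f' =1 fun=> 0} by move=> g gP; rewrite /f' /= fm1 // subrr.
have [m2 f'm2] := is_coboundary_coprime coPk (torsion f' f'c)
  (cocycle_index_coboundary sPH f'c f'P).
by exists (m2 + m1) => g gH; rewrite coboundaryD -f'm2 // subrK.
Qed.

End GroupCohomology.

Section PermutationModule.
Variables (T : finType) (H : {group {perm T}}) (W : {perm T} -> T -> int).
Hypothesis Wc : {in H &, forall g h y, W (g * h)%g y = W g ((h^-1)%g y) + W h y}.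

Lemma perm_cocycle_stab r : {in 'C_H[r | 'P]%g, forall s, W s r = 0}.
Proof.
apply: (int_hom_trivial (H := 'C_H[r | 'P]%G) (phi := fun s => W s r)).
move=> s t /setIP [sH _] /setIP [tH /astab1P /= tr].
by rewrite /= Wc // -{1}tr /= permK.
Qed.

Definition orbit_rep y := odflt y [pick z in orbit 'P H y].

Lemma orbit_rep_in y : orbit_rep y \in orbit 'P H y.
Proof. by rewrite /orbit_rep; case: pickP => [// | /(_ y)]; rewrite orbit_refl. Qed.

Lemma orbit_repV g y : g \in H -> orbit_rep ((g^-1)%g y) = orbit_rep y.
Proof.
move=> gH; rewrite /orbit_rep (orbit_act 'P y (groupVr gH)).
by case: pickP => // /(_ y); rewrite orbit_refl.
Qed.

Definition transporter y := odflt 1%g [pick h in H | h (orbit_rep y) == y].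

Lemma transporterP y : transporter y \in H /\ transporter y (orbit_rep y) = y.
Proof.
rewrite /transporter; case: pickP => [h /andP [hH /eqP] // | none].
have /orbitP [h hH hy] := orbit_rep_in y.
by have := none h^-1%g; rewrite groupV hH -hy /= permK eqxx.
Qed.

(* Shapiro's lemma for the permutation module: W vanishes on point stabilisers,
   so it is determined by its values on the transporters from orbit representatives. *)
Lemma perm_cocycle_coboundary :
  exists w : T -> int, {in H, forall g y, W g y = w ((g^-1)%g y) - w y}.
Proof.
exists (fun y => - W (transporter y) y) => g gH y; rewrite opprK.
have [kH ky] := transporterP y.
have [k'H k'y] := transporterP ((g^-1)%g y).
rewrite orbit_repV // in k'y.
set k := transporter y in kH ky *; set k' := transporter _ in k'H k'y *.
set r := orbit_rep y in ky k'y *.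
pose s := (k' * g * k^-1)%g.
have sH : s \in H by rewrite !groupM ?groupV.
have s_stab : s \in 'C_H[r | 'P]%g.
  by rewrite inE sH; apply/astab1P; rewrite /= apermE /s !permM k'y permKV -{1}ky permK.
have kinv : (k^-1)%g y = r by rewrite -ky permK.
have := Wc sH kH y; rewrite mulgKV Wc // kinv (perm_cocycle_stab s_stab) add0r => <-.
by rewrite addKr.
Qed.

End PermutationModule.

Section SignedPerm.
Variable n : nat.
Implicit Types p r : lperm n.

Definition signed p := forall j s, p (j, ~~ s) = ((p (j, s)).1, ~~ (p (j, s)).2).
Definition pidx p j := (p (j, true)).1.
Definition psgn p j := (p (j, true)).2.

Lemma WD_signed p : p \in WD n -> signed p.
Proof. by rewrite inE => /andP [/forallP pC _] j s; apply/eqP: (pC (j, s)). Qed.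

Lemma WD_even p : p \in WD n -> ~~ odd #|Jset p|.
Proof. by rewrite inE => /andP []. Qed.

Section Signed.
Variable p : lperm n.
Hypothesis hp : signed p.

Lemma signed_permE j s : p (j, s) = (pidx p j, if s then psgn p j else ~~ psgn p j).
Proof. by case: s; rewrite ?(hp j true) /pidx /psgn; case: (p _). Qed.

Lemma pidx_inj : injective (pidx p).
Proof.
move=> j j' e; have /perm_inj [] // : p (j, true) = p (j', psgn p j == psgn p j').
by rewrite !signed_permE e; case: (psgn p j); case: (psgn p j').
Qed.

Lemma pidx_surj k : exists j, k = pidx p j.
Proof. by have [q _ qK] := injF_bij pidx_inj; exists (q k); rewrite qK. Qed.

Lemma mem_Jset j : (pidx p j \in Jset p) = ~~ psgn p j.
Proof.
rewrite inE; apply/existsP/idP => [[j' /eqP] | nj]; last first.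
  by exists j; rewrite signed_permE; case: (psgn p j) nj.
by rewrite signed_permE => -[/pidx_inj -> ->].
Qed.

Lemma card_Jset : #|Jset p| = (\sum_j ~~ psgn p j)%N.
Proof.
have -> : Jset p = pidx p @: [set j | ~~ psgn p j].
  apply/setP => k; have [j ->] := pidx_surj k.
  by rewrite mem_Jset (mem_imset _ _ pidx_inj) inE.
rewrite (card_imset _ pidx_inj) -sum1dep_card big_mkcond /=.
by apply: eq_bigr => j _; case: (psgn p j).
Qed.

Lemma permV_signed j s : (p^-1)%g (pidx p j, s) = (j, if psgn p j then s else ~~ s).
Proof. by apply: (@perm_inj _ p); rewrite permKV signed_permE; case: (psgn p j); case: s. Qed.

End Signed.

Lemma signed1 : signed 1%g.
Proof. by move=> j s; rewrite !perm1. Qed.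

Lemma signedM p r : signed p -> signed r -> signed (p * r)%g.
Proof. by move=> hp hr j s; rewrite !permM hp; case: (p (j, s)) => k t; apply: hr. Qed.

Lemma pidxM p r : signed p -> signed r -> forall j, pidx (p * r)%g j = pidx r (pidx p j).
Proof. by move=> hp hr j; rewrite /pidx permM (signed_permE hp) (signed_permE hr). Qed.

Lemma psgnM p r : signed p -> signed r -> forall j,
  psgn (p * r)%g j = (psgn p j == psgn r (pidx p j)).
Proof.
move=> hp hr j; rewrite /psgn permM (signed_permE hp) (signed_permE hr) /=.
by rewrite -/(psgn r _); case: (psgn p j); case: (psgn r _).
Qed.

End SignedPerm.

Section PicAction.
Variable n : nat.
Implicit Types p r : lperm n.

Lemma pic_act_is_zmod_morphism p : zmod_morphism (pic_act p).
Proof.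
have if0B (b : bool) (x y : int) :
    (if b then 0 else x - y) = (if b then 0 else x) - (if b then 0 else y).
  by case: b; rewrite ?subr0.
have if2B (b b' : bool) (x y : int) :
    (if b then x - y else if b' then - (x - y) else 0)
    = (if b then x else if b' then - x else 0) - (if b then y else if b' then - y else 0).
  by case: b; case: b'; rewrite ?subr0 ?opprB ?opprK // addrC.
move=> [[a b] c] [[a' b'] c']; congr (_, _, _) => /=.
  under eq_bigr => j _ do rewrite !ffunE if0B.
  by rewrite sumrB; ring.
apply/ffunP => k; rewrite !ffunE.
under eq_bigr => j _ do rewrite !ffunE if2B.
by rewrite sumrB; case: ifP => _; ring.
Qed.

HB.instance Definition _ p :=
  GRing.isZmodMorphism.Build (pic n) (pic n) (pic_act p) (pic_act_is_zmod_morphism p).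

Lemma pic_act_b p v : (pic_act p v).1.2 =
  v.1.2 + v.1.1 * (#|Jset p| %/ 2)%N%:Z + \sum_j (if psgn p j then 0 else v.2 j).
Proof. by []. Qed.

Lemma pic_act_c p v j : signed p ->
  (pic_act p v).2 (pidx p j) = if psgn p j then v.2 j else - v.1.1 - v.2 j.
Proof.
move=> hp; rewrite ffunE (mem_Jset hp) (bigD1 j) //= big1 => [|j' j'j].
  by rewrite !(signed_permE hp); case: (psgn p j); rewrite !xpair_eqE !eqxx /= ?addr0 ?add0r.
by rewrite !(signed_permE hp) !xpair_eqE (inj_eq (pidx_inj hp)) (negbTE j'j).
Qed.

Lemma pic_ext (u v : pic n) : u.1.1 = v.1.1 -> u.1.2 = v.1.2 -> u.2 =1 v.2 -> u = v.
Proof. by case: u => [[a b] c]; case: v => [[a' b'] c'] /= -> -> /ffunP ->. Qed.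

Lemma pic_mulrnE (u : pic n) k : u *+ k = (u.1.1 *+ k, u.1.2 *+ k, u.2 *+ k).
Proof. by elim: k => [|k IHk]; rewrite ?mulr0n // !mulrS IHk. Qed.

Lemma pic_act1 (v : pic n) : pic_act 1%g v = v.
Proof.
have pidx1 j : pidx 1%g j = j by rewrite /pidx perm1.
have psgn1 j : psgn 1%g j = true by rewrite /psgn perm1.
apply: pic_ext => // [|k].
  rewrite pic_act_b card_Jset; last exact: signed1.
  by rewrite !big1 ?mulr0 ?addr0 // => j _; rewrite psgn1.
by have := pic_act_c v k (@signed1 n); rewrite pidx1 psgn1.
Qed.

Lemma b_coord_compose (T U : 'I_n -> bool) (a b : int) (c : 'I_n -> int) :
  ~~ odd (\sum_j ~~ T j) -> ~~ odd (\sum_j ~~ U j) ->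
  b + a * ((\sum_j ~~ (T j == U j)) %/ 2)%N%:Z + \sum_j (if T j == U j then 0 else c j)
  = b + a * ((\sum_j ~~ T j) %/ 2)%N%:Z + \sum_j (if T j then 0 else c j)
    + a * ((\sum_j ~~ U j) %/ 2)%N%:Z
    + \sum_j (if U j then 0 else if T j then c j else - a - c j).
Proof.
have count : (\sum_j ~~ (T j == U j) + 2 * \sum_j (~~ T j && ~~ U j)
              = \sum_j ~~ T j + \sum_j ~~ U j)%N.
  by rewrite big_distrr -!big_split; apply: eq_bigr => j _; case: (T j); case: (U j).
rewrite -!dvdn2 => evenT evenU.
have -> : ((\sum_j ~~ (T j == U j)) %/ 2)%N%:Z = ((\sum_j ~~ T j) %/ 2)%N%:Z
    + ((\sum_j ~~ U j) %/ 2)%N%:Z - (\sum_j (~~ T j && ~~ U j))%N%:Z by lia.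
have -> : \sum_j (if T j == U j then 0 else c j)
    = \sum_j (if T j then 0 else c j)
      + \sum_j (if U j then 0 else if T j then c j else - a - c j)
      + a * (\sum_j (~~ T j && ~~ U j))%N%:Z.
  rewrite -natz mulr_natr -sumrMnr -!big_split; apply: eq_bigr => j _.
  by case: (T j); case: (U j) => /=; ring.
ring.
Qed.

Lemma pic_actM p r (v : pic n) : p \in WD n -> r \in WD n ->
  pic_act (p * r)%g v = pic_act r (pic_act p v).
Proof.
move=> pW rW; have hp := WD_signed pW; have hr := WD_signed rW.
have hpr := signedM hp hr.
apply: pic_ext => // [|k]; last first.
  have [j ->] := pidx_surj hpr k.
  rewrite (pic_act_c _ _ hpr) (pidxM hp hr) (pic_act_c _ _ hr) (pic_act_c _ _ hp).
  by rewrite (psgnM hp hr) /=; case: (psgn p j); case: (psgn r _) => /=; ring.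
set T := psgn p; set U := fun j => psgn r (pidx p j).
have cardr : (\sum_k ~~ psgn r k = \sum_j ~~ U j)%N by rewrite (reindex_inj (pidx_inj hp)).
have sumr : \sum_k (if psgn r k then 0 else (pic_act p v).2 k)
          = \sum_j (if U j then 0 else if T j then v.2 j else - v.1.1 - v.2 j).
  by rewrite (reindex_inj (pidx_inj hp)); apply: eq_bigr => j _; rewrite (pic_act_c _ _ hp).
have cardpr : (\sum_j ~~ psgn (p * r)%g j = \sum_j ~~ (T j == U j))%N.
  by apply: eq_bigr => j _; rewrite (psgnM hp hr).
have sumpr : \sum_j (if psgn (p * r)%g j then 0 else v.2 j)
          = \sum_j (if T j == U j then 0 else v.2 j).
  by apply: eq_bigr => j _; rewrite (psgnM hp hr).
move: (WD_even pW) (WD_even rW); rewrite !pic_act_b /= !card_Jset // cardr cardpr sumr sumpr.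
exact: b_coord_compose.
Qed.

End PicAction.

Section PicCohomology.
Variable n : nat.
Implicit Types (H : {group lperm n}) (f : lperm n -> pic n).

Definition pic_additive (p : lperm n) : {additive pic n -> pic n} := pic_act p.

Definition beta (u : pic n) := u.1.2 *+ 2 + \sum_j u.2 j.

Lemma betaD u v : beta (u + v) = beta u + beta v.
Proof.
rewrite /beta /= mulrnDl.
under eq_bigr => j _ do rewrite ffunE.
by rewrite big_split /= addrACA.
Qed.

Lemma beta_pic_act p u : signed p -> u.1.1 = 0 -> beta (pic_act p u) = beta u.
Proof.
move=> hp u0; rewrite /beta (reindex_inj (pidx_inj hp)) pic_act_b u0 mul0r addr0.
under eq_bigr => j _ do rewrite (pic_act_c _ _ hp) u0 sub0r.
rewrite mulrnDl -addrA; congr (_ + _).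
rewrite -sumrMnl -big_split /=; apply: eq_bigr => j _.
by case: (psgn p j); rewrite ?mul0rn ?add0r // mulr2n addrK.
Qed.

Lemma cocycle_a H f : cocycle pic_additive H f -> {in H, forall g, (f g).1.1 = 0}.
Proof.
move=> fc; apply: (int_hom_trivial (phi := fun g => (f g).1.1)) => g h gH hH.
by rewrite /= fc.
Qed.

Lemma cocycle_beta H f : H \subset WD n -> cocycle pic_additive H f ->
  {in H, forall g, beta (f g) = 0}.
Proof.
move=> sHW fc; apply: (int_hom_trivial (phi := fun g => beta (f g))) => g h gH hH.
rewrite /= fc // betaD beta_pic_act ?(cocycle_a fc gH) //.
by apply: WD_signed; apply: (subsetP sHW).
Qed.

Lemma cocycle_c H f : H \subset WD n -> cocycle pic_additive H f ->
  exists m : 'I_n -> int, {in H, forall g j,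
    (f g).2 (pidx g j) *+ 2 = (if psgn g j then m j else - m j) - m (pidx g j)}.
Proof.
move=> sHW fc; have hs g : g \in H -> signed g by move=> /(subsetP sHW) /WD_signed.
(* With signs, the E-coordinates of f form a cocycle of the permutation module
   on the 2n lines. *)
pose W g (x : 'I_n * bool) := if x.2 then (f g).2 x.1 else - (f g).2 x.1.
have Wc : {in H &, forall g h y, W (g * h)%g y = W g ((h^-1)%g y) + W h y}.
  move=> g h gH hH [k s]; have [j ->] := pidx_surj (hs h hH) k.
  rewrite /W (permV_signed (hs h hH)) /= fc // ffunE (pic_act_c _ _ (hs h hH)).
  rewrite (cocycle_a fc gH) sub0r.
  by case: (psgn h j); case: s => /=; rewrite ?opprD ?opprK.
have [w wP] := perm_cocycle_coboundary Wc.
exists (fun j => w (j, true) - w (j, false)) => g gH j.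
have := wP g gH (pidx g j, true); have := wP g gH (pidx g j, false).
rewrite /W /= !(permV_signed (hs g gH)) mulr2n => Wf Wt.
by rewrite -[X in _ + X]opprK Wf Wt; case: (psgn g j) => /=; ring.
Qed.

Lemma pic_cocycle_torsion H f : H \subset WD n -> cocycle pic_additive H f ->
  is_coboundary pic_additive H (fun g => f g *+ 4).
Proof.
move=> sHW fc; have [m fm] := cocycle_c sHW fc.
exists (0, 0, [ffun j => m j *+ 2]) => g gH.
have hg : signed g by apply: WD_signed; apply: (subsetP sHW).
have subc (u v : pic n) i : (u - v).2 i = u.2 i - v.2 i by rewrite /= !ffunE.
rewrite pic_mulrnE; apply: pic_ext => [|| k].
- by rewrite /= (cocycle_a fc gH) mul0rn subrr.
- have := cocycle_beta sHW fc gH; rewrite /beta => /eqP; rewrite addr_eq0 => /eqP b2.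
  have sum_m : \sum_j m (pidx g j) = \sum_j m j by rewrite [RHS](reindex_inj (pidx_inj hg)).
  rewrite /= -[4%N]/(2 * 2)%N mulrnA b2 mulNrn -sumrMnl (reindex_inj (pidx_inj hg)).
  under eq_bigr => j _ do rewrite fm //.
  rewrite sumrB sum_m opprB -sumrB mul0r !add0r subr0.
  by apply: eq_bigr => j _; rewrite ffunE -/(psgn g j); case: (psgn g j); rewrite ?subrr ?opprK.
have [j ->] := pidx_surj hg k.
rewrite [LHS]/= ffunMnE -[4%N]/(2 * 2)%N mulrnA fm // /coboundary subc (pic_act_c _ _ hg) /=.
by rewrite !ffunE; case: (psgn g j); ring.
Qed.

End PicCohomology.

Theorem lemma3p1 (n : nat) (G G2 : {group {perm ('I_n * bool)}}) :
  G \subset WD n -> (2.-Sylow(G) G2)%g ->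
  (H1_condition G <-> H1_condition G2).
Proof.
move=> sGW sylG2.
have actM : {in G &, forall g h v,
    pic_additive (g * h)%g v = pic_additive h (pic_additive g v)}.
  by move=> g h gG hG v; apply: pic_actM; apply: (subsetP sGW).
split=> [H1G H sHG2 | H1G2 H sHG].
  exact: H1G (subset_trans sHG2 (pHall_sub sylG2)).
have [P sylP] := Sylow_exists 2 H.
have sPH := pHall_sub sylP; have sPG := subset_trans sPH sHG.
have [x xG sPxG2] := Sylow_Jsub sylG2 sPG (pHall_pgroup sylP).
apply: (H1_trivial_coprime_index (k := 4%N) actM sHG sPH).
- by case/and3P: sylP => _ _ /(pnat_coprime (isT : (2.-nat 4)%N)).
- by move=> f; apply: pic_cocycle_torsion; apply: subset_trans sHG sGW.
- by apply: (H1_trivial_conjg (@pic_act1 n) actM sPG xG); apply: H1G2.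
Qed.
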